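(* Let $\mathbb{F}$ be a field, $n\geq 1$, and $(s_0,\ldots,s_{n-1})\in\mathbb{F}^n$ a non-zero sequence with inverse form $F=\sum_{j=1-n}^{0} s_{-j}\,x^{j}z^{1-n-j}\in\mathbb{F}[x^{-1},z^{-1}]$. Then the maps $c\mapsto c^\wedge$ and $f\mapsto f^\vee$ are mutually inverse bijections $$\chi(s_0,\ldots,s_{n-1})\;\leftrightarrows\;\mathcal{I}_F\cap\mathcal{L},$$ and they preserve degree: $|c^\wedge|=|c|$ for $c\in\chi(s_0,\ldots,s_{n-1})$ and $|f^\vee|=|f|$ for $f\in\mathcal{I}_F\cap\mathcal{L}$. Consequently $\lambda(s_0,\ldots,s_{n-1})=\lambda_F$.
   Context: $R=\mathbb{F}[x,z]$; a form is a homogeneous polynomial, $|\varphi|$ denotes total degree. $M=\mathbb{F}[x^{-1},z^{-1}]$ is an $R$-module via $x^pz^q\circ x^{-u}z^{-v}=x^{p-u}z^{q-v}$ if $p\le u$ and $q\le v$, and $0$ otherwise ($p,q,u,v\ge 0$), extended bilinearly. For $F\in M$, $\mathcal{I}_F=\{\varphi\in R:\varphi\circ F=0\}$ (the annihilator ideal). $\mathcal{L}$ is the set of non-zero forms $\varphi\in R$ whose coefficient of $x^{|\varphi|}$ equals $1$ (equivalently, monic forms whose graded-lexicographic leading term, with $x\succ z$, is not divisible by $z$). A monic $c\in\mathbb{F}[x]$ of degree $l$ is a characteristic polynomial of $(s_0,\ldots,s_{n-1})$ if either $l\ge n$ or $c_ls_{k+l}+\cdots+c_0s_k=0$ for all $0\le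 k\le n-l-1$; $\chi(s_0,\ldots,s_{n-1})$ is the set of these, and $\lambda(s_0,\ldots,s_{n-1})$ is the minimal degree of an element of it (the linear complexity). $\lambda_F=\min\{|f|: f\in\mathcal{I}_F\cap\mathcal{L}\}$. Homogenisation: $c^\wedge(x,z)=z^{|c|}c(x/z)$; dehomogenisation: $f^\vee(x)=f(x,1)$. *)

From HB Require Import structures.
From mathcomp Require Import all_boot all_order all_algebra.
From mathcomp Require Import mpoly.
Set Implicit Arguments. Unset Strict Implicit. Unset Printing Implicit Defensive.
Import GRing.Theory.
Local Open Scope ring_scope.

Section Defs.
Variable F : fieldType.

(* R = F[x,z] is {mpoly F[2]}; variable 0 is x, variable 1 is z.            *)
Definition mon2 (a b : nat) : 'X_{1..2} := [multinom [tuple a; b]].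

(* M = F[x^-1,z^-1] is represented by {mpoly F[2]} as well, where the basis *)
(* monomial 'X_[m] with m = (u,v) stands for x^(-u) z^(-v).                  *)
Definition Mmod := {mpoly F[2]}.

(* The R-module action of R on M, extended bilinearly from                  *)
(* x^p z^q o x^-u z^-v = x^(p-u) z^(q-v) if p<=u, q<=v, and 0 otherwise.     *)
Definition act (phi : {mpoly F[2]}) (G : Mmod) : Mmod :=
  \sum_(m <- msupp phi) \sum_(m' <- msupp G | (m <= m')%MM)
     (phi@_m * G@_m') *: 'X_[(m' - m)%MM].

Definition annih (G : Mmod) (phi : {mpoly F[2]}) : Prop := act phi G = 0.

Definition tdeg (phi : {mpoly F[2]}) : nat := (msize phi).-1.

Definition is_form (phi : {mpoly F[2]}) : Prop := exists d, phi \is d.-homog.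

Definition inL (phi : {mpoly F[2]}) : Prop :=
  [/\ is_form phi, phi != 0 & phi@_(mon2 (tdeg phi) 0) = 1].

(* F = sum_{j=1-n}^0 s_{-j} x^j z^{1-n-j} = sum_{k<n} s_k x^-k z^-(n-1-k).  *)
Definition inv_form (n : nat) (s : n.-tuple F) : Mmod :=
  \sum_(k < n) s`_k *: 'X_[mon2 k (n.-1 - k)].

Definition charpoly_of (n : nat) (s : n.-tuple F) (c : {poly F}) : Prop :=
  c \is monic /\
  let l := (size c).-1 in
  ((n <= l)%N \/
   forall k, (k <= n - l - 1)%N -> \sum_(i < l.+1) c`_i * s`_(k + i) = 0).

(* homogenisation c^ (x,z) = z^|c| c(x/z) *)
Definition homogen (c : {poly F}) : {mpoly F[2]} :=
  \sum_(i < size c) c`_i *: 'X_[mon2 i ((size c).-1 - i)].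

(* dehomogenisation f^v(x) = f(x,1) *)
Definition dehomogen (f : {mpoly F[2]}) : {poly F} :=
  \sum_(m <- msupp f) f@_m *: 'X^(m ord0).

Definition is_min_nat (P : nat -> Prop) (l : nat) : Prop :=
  P l /\ forall l', P l' -> (l <= l')%N.

Definition is_lin_complexity (n : nat) (s : n.-tuple F) (l : nat) : Prop :=
  is_min_nat (fun d => exists c, charpoly_of s c /\ (size c).-1 = d) l.

Definition is_lambda_form (G : Mmod) (l : nat) : Prop :=
  is_min_nat (fun d => exists f, annih G f /\ inL f /\ tdeg f = d) l.

End Defs.

From HB Require Import structures.
From mathcomp Require Import all_boot all_order all_algebra.
From mathcomp Require Import mpoly.
From mathcomp Require Import zify.
From Stdlib Require Import Classical.
Set Implicit Arguments. Unset Strict Implicit. Unset Printing Implicit Defensive.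
Import GRing.Theory.
Local Open Scope ring_scope.

(* Every binary form of degree d is  bform d a = sum_(i<=d)
   a i x^i z^(d-i)  for its coefficient function a; the inverse form of
   (s_0,...,s_{n-1}) is  bform (n-1) s  read in M, and  c^  is
   bform |c| (coefficients of c).  The key computation (act_bform) is that
   the coefficient of x^-k z^-(n-1-l-k) in  bform l c o bform (n-1) s  is
   sum_(i<=l) c_i s_(k+i), while all other coefficients vanish; hence the
   form annihilates F exactly when either l >= n or the linear recurrence
   with coefficients c holds for all shifts k <= n-1-l (annih_bform).  This
   is literally the definition of a characteristic polynomial, so the
   direction  c |-> c^  (homogen_charpoly) and, after writing a form in L
   as bform d a with a d = 1, the direction  f |-> f^v  (dehomogen_annih)
   follow, together with the degree identities and the two inverse laws.
   Degree-preserving bijections transport minima, so lambda = lambda_F once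
   lambda exists (x^n is always a characteristic polynomial). *)

Lemma sum_msupp_widen (R : nzRingType) (k : nat) (V : zmodType)
    (p : {mpoly R[k]}) (r : seq 'X_{1..k}) (H : 'X_{1..k} -> V) :
  uniq r -> {subset msupp p <= r} -> (forall m, p@_m = 0 -> H m = 0) ->
  \sum_(m <- msupp p) H m = \sum_(m <- r) H m.
Proof.
move=> Ur Sr H0.
rewrite [RHS](bigID (fun m => m \in msupp p)) /= [X in _ + X]big1 ?addr0; last first.
  by move=> m Hm; apply: H0; apply/eqP; rewrite mcoeff_eq0.
rewrite -[RHS]big_filter; apply: perm_big; apply: uniq_perm.
- exact: msupp_uniq.
- exact: filter_uniq.
- move=> m; rewrite mem_filter; case E: (m \in msupp p) => //=.
  by rewrite (Sr _ E).
Qed.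

Lemma sum_msupp_delta (R : nzRingType) (k : nat) (G : {mpoly R[k]}) u :
  \sum_(m <- msupp G) (m == u)%:R * G@_m = G@_u.
Proof.
case Hu: (u \in msupp G).
  rewrite (bigD1_seq u) ?msupp_uniq //= eqxx mul1r big1 ?addr0 //.
  by move=> m /negPf ->; rewrite mul0r.
rewrite big1_seq; last first.
  move=> m /andP[_ Hm]; case: eqP => [Em|]; last by rewrite mul0r.
  by rewrite -Em Hm in Hu.
by apply/esym/eqP; rewrite mcoeff_eq0 Hu.
Qed.

Lemma is_min_nat_exists (P : nat -> Prop) N : P N -> exists l, is_min_nat P l.
Proof.
elim/ltn_ind: N => N IH HN.
case: (classic (exists l', (l' < N)%N /\ P l')) => [[l' [Hl' Pl']]|Hno].
  exact: (IH l').
exists N; split => // l' Pl'.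
by rewrite leqNgt; apply/negP => Hlt; apply: Hno; exists l'.
Qed.

Lemma is_min_nat_ext (P Q : nat -> Prop) l :
  (forall d, P d <-> Q d) -> is_min_nat P l -> is_min_nat Q l.
Proof. by move=> E [/E Ql Hm]; split=> // l' /E; apply: Hm. Qed.

Section BinaryForms.
Variable F : fieldType.

Lemma mon2_0 a b : mon2 a b ord0 = a. Proof. by []. Qed.
Lemma mon2_1 a b : mon2 a b ord_max = b. Proof. by []. Qed.

Lemma mon2_eta (m : 'X_{1..2}) : m = mon2 (m ord0) (m ord_max).
Proof.
apply/mnmP => i.
have [->|->] : i = ord0 \/ i = ord_max.
  by case: i => -[|[|i]] Hi; [left|right|]; try apply/val_inj.
all: by [].
Qed.

Lemma mon2_eq (m : 'X_{1..2}) a b :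
  (mon2 a b == m) = (a == m ord0) && (b == m ord_max).
Proof.
apply/eqP/andP => [<-|[/eqP-> /eqP->]]; first by rewrite mon2_0 mon2_1.
by rewrite -mon2_eta.
Qed.

Lemma mdeg2 (m : 'X_{1..2}) : mdeg m = (m ord0 + m ord_max)%N.
Proof.
rewrite mdegE big_ord_recr big_ord_recr big_ord0 /= add0n.
by congr (m _ + _)%N; apply/val_inj.
Qed.

Lemma mdeg_mon2 a b : mdeg (mon2 a b) = (a + b)%N.
Proof. by rewrite mdeg2. Qed.

Definition bform (d : nat) (a : nat -> F) : {mpoly F[2]} :=
  \sum_(i < d.+1) a i *: 'X_[mon2 i (d - i)].

Lemma bformE d a m : (bform d a)@_m = if mdeg m == d then a (m ord0) else 0.
Proof.
rewrite /bform raddf_sum /=.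
under eq_bigr do rewrite mcoeffZ mcoeffX mon2_eq.
case: eqP => Hd.
- have Hlt : (m ord0 < d.+1)%N by rewrite ltnS -Hd mdeg2 leq_addr.
  rewrite (bigD1 (Ordinal Hlt)) //= eqxx /=.
  have -> : (d - m ord0 == m ord_max)%N by rewrite -Hd mdeg2 addKn.
  rewrite mulr1 big1 ?addr0 // => i Hi.
  have -> : (i == m ord0 :> nat) = false.
    by apply/negbTE; apply: contra Hi => /eqP Hi'; apply/eqP/val_inj.
  by rewrite mulr0.
- rewrite big1 // => i _.
  case: andP => [[/eqP Hi /eqP Hj]|]; last by rewrite mulr0.
  by exfalso; apply: Hd; rewrite mdeg2 -Hi -Hj subnKC // -ltnS.
Qed.

Lemma bform_homog d a : bform d a \is d.-homog.
Proof.
apply/dhomogP => m; rewrite mcoeff_msupp bformE.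
by case: (mdeg m =P d) => // _; rewrite eqxx.
Qed.

Lemma bform_top d a : (bform d a)@_(mon2 d 0) = a d.
Proof. by rewrite bformE mdeg_mon2 addn0 eqxx. Qed.

Lemma bform_ext d (a b : nat -> F) :
  (forall i, (i <= d)%N -> a i = b i) -> bform d a = bform d b.
Proof. by move=> H; apply: eq_bigr => i _; rewrite H // -ltnS. Qed.

Lemma form_bform (f : {mpoly F[2]}) d :
  f \is d.-homog -> f = bform d (fun i => f@_(mon2 i (d - i))).
Proof.
move=> Hf; apply/mpolyP => t; rewrite bformE.
have [Hd|Hd] := eqVneq (mdeg t) d; last exact: dhomog_nemf_coeff Hf Hd.
by rewrite {1}(mon2_eta t) -Hd mdeg2 addKn.
Qed.

Definition dmons (d : nat) : seq 'X_{1..2} :=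
  [seq mon2 (nat_of_ord i) (d - i) | i : 'I_d.+1 <- enum 'I_d.+1].

Lemma dmons_uniq d : uniq (dmons d).
Proof.
rewrite map_inj_uniq ?enum_uniq // => i j /(congr1 (fun m : 'X_{1..2} => m ord0)).
by rewrite !mon2_0 => /val_inj.
Qed.

Lemma bform_supp d a : {subset msupp (bform d a) <= dmons d}.
Proof.
move=> m; rewrite mcoeff_msupp bformE.
have [Hd _|]:= eqVneq (mdeg m) d; last by rewrite eqxx.
have Hlt : (m ord0 < d.+1)%N by rewrite ltnS -Hd mdeg2 leq_addr.
apply/mapP; exists (Ordinal Hlt); first by rewrite mem_enum.
by rewrite /= {1}(mon2_eta m) -Hd mdeg2 addKn.
Qed.

Lemma sum_bform_supp (V : zmodType) d a (H : 'X_{1..2} -> V) :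
  (forall m, (bform d a)@_m = 0 -> H m = 0) ->
  \sum_(m <- msupp (bform d a)) H m = \sum_(i < d.+1) H (mon2 i (d - i)).
Proof.
move=> H0; rewrite (sum_msupp_widen (r := dmons d)) ?dmons_uniq //.
  by rewrite big_map big_enum.
exact: bform_supp.
Qed.

Lemma actE (phi G : {mpoly F[2]}) t :
  (act phi G)@_t = \sum_(m <- msupp phi) phi@_m * G@_(m + t)%MM.
Proof.
rewrite /act raddf_sum; apply: eq_bigr => m _.
rewrite raddf_sum big_mkcond /= -[G@_(m + t)%MM]sum_msupp_delta mulr_sumr.
apply: eq_bigr => m' _; rewrite mcoeffZ mcoeffX.
case: (boolP (m <= m')%MM) => Hle.
  have -> : ((m' - m)%MM == t) = (m' == m + t)%MM.
    apply/eqP/eqP => [<-|->]; first by rewrite addmC submK.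
    by rewrite addmC addmK.
  by rewrite -mulrA (mulrC G@_m').
case: eqP => [E|]; last by rewrite !mul0r mulr0.
by rewrite E lem_addr in Hle.
Qed.

Lemma act_bform l c d s t :
  (act (bform l c) (bform d s))@_t =
  if (l + mdeg t == d)%N then \sum_(i < l.+1) c i * s (i + t ord0)%N else 0.
Proof.
rewrite actE (sum_bform_supp (H := fun m => (bform l c)@_m * (bform d s)@_(m + t)%MM));
  last by move=> m ->; rewrite mul0r.
transitivity
  (\sum_(i < l.+1) c i * (if (l + mdeg t == d)%N then s (i + t ord0)%N else 0)).
  apply: eq_bigr => i _.
  have Hi : (i <= l)%N by rewrite -ltnS.
  by rewrite !bformE mdegD !mdeg_mon2 (subnKC Hi) eqxx mnmDE mon2_0.
by case: eqP => _ //; rewrite big1 // => i _; rewrite mulr0.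
Qed.

Lemma annih_bform l c d s :
  act (bform l c) (bform d s) = 0 <->
  ((d < l)%N \/ forall k, (k <= d - l)%N -> \sum_(i < l.+1) c i * s (k + i)%N = 0).
Proof.
split => [H|H].
  case: (ltnP d l) => Hl; [by left | right => k Hk].
  have := congr1 (mcoeff (mon2 k (d - l - k))) H.
  rewrite act_bform mcoeff0 mdeg_mon2 subnKC // subnKC // eqxx mon2_0 => E.
  by rewrite -[X in _ = X]E; apply: eq_bigr => i _; rewrite addnC.
apply/mpolyP => t; rewrite act_bform mcoeff0.
case: eqP => // He; case: H => [Hl|H].
  by move: Hl; rewrite -He ltnNge leq_addr.
rewrite -[RHS](H (t ord0)); first by apply: eq_bigr => i _; rewrite addnC.
by rewrite -He addKn mdeg2 leq_addr.
Qed.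

Lemma bform_tdeg d (a : nat -> F) : a d != 0 -> tdeg (bform d a) = d.
Proof.
move=> Ha.
have Hn : bform d a != 0.
  by apply: contraNneq Ha => H; rewrite -bform_top H mcoeff0.
exact: dhomog_uniq Hn (dhomog_msize (bform_homog d a)) (bform_homog d a).
Qed.

Lemma bform_inL d (a : nat -> F) : a d = 1 -> inL (bform d a).
Proof.
move=> Ha; have Ha' : a d != 0 by rewrite Ha oner_neq0.
split; first by exists d; apply: bform_homog.
- by apply: contraNneq Ha' => H; rewrite -bform_top H mcoeff0.
- by rewrite bform_tdeg // bform_top.
Qed.

Lemma homogen_bform (c : {poly F}) l :
  size c = l.+1 -> homogen c = bform l (fun i => c`_i).
Proof. by move=> Hs; rewrite /homogen /bform Hs. Qed.

Lemma dehomogen_bform d (a : nat -> F) :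
  dehomogen (bform d a) = \poly_(i < d.+1) a i.
Proof.
rewrite /dehomogen (sum_bform_supp (H := fun m => (bform d a)@_m *: 'X^(m ord0)));
  last by move=> m ->; rewrite scale0r.
rewrite poly_def; apply: eq_bigr => i _.
have Hi : (i <= d)%N by rewrite -ltnS.
by rewrite bformE mdeg_mon2 (subnKC Hi) eqxx.
Qed.

Lemma homogen_charpoly n (s : n.+1.-tuple F) (c : {poly F}) :
  charpoly_of s c ->
  [/\ annih (inv_form s) (homogen c) /\ inL (homogen c),
      tdeg (homogen c) = (size c).-1 &
      dehomogen (homogen c) = c].
Proof.
move=> [Hm Hrec].
have Hs : size c = ((size c).-1).+1 by rewrite prednK // size_poly_gt0 monic_neq0.
move: Hrec; set l := (size c).-1 => /= Hrec.
have Hcl : c`_l = 1 by move/monicP: Hm.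
rewrite (homogen_bform Hs); split.
- split; last exact: bform_inL.
  apply/annih_bform; case: Hrec => [|Hk]; [by left | right => k Hk'].
  by apply: Hk; move: Hk'; lia.
- by apply: bform_tdeg; rewrite Hcl oner_neq0.
- by rewrite dehomogen_bform -Hs coefK.
Qed.

Lemma dehomogen_annih n (s : n.+1.-tuple F) (f : {mpoly F[2]}) :
  annih (inv_form s) f -> inL f ->
  [/\ charpoly_of s (dehomogen f),
      (size (dehomogen f)).-1 = tdeg f &
      homogen (dehomogen f) = f].
Proof.
move=> Ha [[d Hd] Hf0 Htop].
have Htd : tdeg f = d := dhomog_uniq Hf0 (dhomog_msize Hd) Hd.
set a := fun i => f@_(mon2 i (d - i)).
have Ef : f = bform d a := form_bform Hd.
have Had : a d = 1 by rewrite /a subnn -Htd.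
set p := \poly_(i < d.+1) a i.
have Hsp : size p = d.+1 by rewrite size_poly_eq // Had oner_neq0.
have Hhp : homogen p = f.
  rewrite (homogen_bform Hsp) Ef; apply: bform_ext => i Hi.
  by rewrite coef_poly ltnS Hi.
have -> : dehomogen f = p by rewrite Ef dehomogen_bform.
rewrite Htd Hsp; split => //; split.
  by apply/monicP; rewrite lead_coefE Hsp coef_poly ltnSn.
move: Ha; rewrite /= Hsp /annih Ef => /annih_bform [|Hk]; [by left | right].
move=> k Hk'; rewrite -[RHS](Hk k); last by move: Hk'; lia.
by apply: eq_bigr => i _; rewrite coef_poly ltn_ord.
Qed.

(* The linear complexity exists, since x^n is a characteristic polynomial. *)
Lemma lin_complexity_exists n (s : n.-tuple F) :
  exists l, is_lin_complexity s l.
Proof.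
apply: (@is_min_nat_exists _ n); exists 'X^n; rewrite size_polyXn.
by split=> //; split; [exact: monicXn | left; rewrite /= size_polyXn].
Qed.

End BinaryForms.

Unset Implicit Arguments.

Theorem theorem2p3 (F : fieldType) (n : nat) (s : n.-tuple F) :
  (1 <= n)%N -> has (fun a => a != 0) s ->
  let G := inv_form s in
  (forall c : {poly F}, charpoly_of s c ->
     [/\ annih G (homogen c) /\ inL (homogen c),
         tdeg (homogen c) = (size c).-1 &
         dehomogen (homogen c) = c]) /\
  (forall f : {mpoly F[2]}, annih G f -> inL f ->
     [/\ charpoly_of s (dehomogen f),
         (size (dehomogen f)).-1 = tdeg f &
         homogen (dehomogen f) = f]) /\
  (exists l, is_lin_complexity s l /\ is_lambda_form G l).
Proof.
case: n s => [//|n] s _ _ G.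
split; first exact: homogen_charpoly.
split; first exact: dehomogen_annih.
have [l Hl] := lin_complexity_exists s.
exists l; split => //; apply: (is_min_nat_ext _ Hl) => d; split.
- move=> [c [Hc <-]]; exists (homogen c).
  by case: (homogen_charpoly Hc) => [[Hannih HinL] Hdeg _]; split.
- move=> [f [Ha [HL <-]]]; exists (dehomogen f).
  by case: (dehomogen_annih Ha HL).
Qed.
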